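(* If $G$ is a connected graph with girth $g\ge 3$ and minimum degree $\delta\ge 3$, then $F_c(G)\ge \delta+g-3$, and this bound is sharp.
   Context: Forcing process: given a set of initially colored vertices, at each step a colored vertex with exactly one non-colored neighbor forces (colors) that neighbor. A set $S\subseteq V(G)$ is a forcing set if iterating this process from $S$ eventually colors all vertices; it is a connected forcing set if moreover the induced subgraph $G[S]$ is connected. $F_c(G)$ is the minimum cardinality of a connected forcing set of $G$. The girth of $G$ is the length of a shortest cycle in $G$. *)

From mathcomp Require Import all_boot.
Set Implicit Arguments. Unset Strict Implicit. Unset Printing Implicit Defensive.

Section Graphs.
Variable T : finType.
Variable e : rel T.

Definition simple_graph : Prop := symmetric e /\ irreflexive e.

Definition nbhd (v : T) : {set T} := [set w | e v w].
Definition deg (v : T) : nat := #|nbhd v|.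

Definition min_degree (delta : nat) : Prop :=
  (exists v, deg v = delta) /\ (forall v, delta <= deg v).

Definition connected_graph : Prop := forall x y : T, connect e x y.

Definition is_cycle (s : seq T) : Prop := [/\ uniq s, 3 <= size s & cycle e s].

Definition girth (g : nat) : Prop :=
  (exists s, is_cycle s /\ size s = g) /\ (forall s, is_cycle s -> g <= size s).

Definition force_step (S : {set T}) (u : T) : Prop :=
  exists v, [/\ v \in S, u \notin S & nbhd v :\: S = [set u]].

Inductive forces_all : {set T} -> Prop :=
| forces_done S : S = [set: T] -> forces_all S
| forces_more S u : force_step S u -> forces_all (u |: S) -> forces_all S.

Definition forcing_set (S : {set T}) : Prop := forces_all S.

Definition induced_connected (S : {set T}) : Prop :=
  forall x y, x \in S -> y \in S ->
    connect [rel a b | [&& e a b, a \in S & b \in S]] x y.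

Definition connected_forcing_set (S : {set T}) : Prop :=
  forcing_set S /\ induced_connected S.

Definition is_Fc (k : nat) : Prop :=
  (exists S, connected_forcing_set S /\ #|S| = k) /\
  (forall S, connected_forcing_set S -> k <= #|S|).

End Graphs.

From mathcomp Require Import all_boot zify.
Set Implicit Arguments. Unset Strict Implicit. Unset Printing Implicit Defensive.

(* Let S be a connected forcing set and run the forcing process from S.  While no
   forced vertex has a second coloured neighbour, every coloured vertex outside S is
   a leaf of the coloured subgraph; as delta >= 3 such a leaf can never force, so all
   forces are made by vertices of S, all of whose other neighbours lie in S.  If this
   persists to the end, S = V, and a shortest cycle together with the delta - 2
   off-cycle neighbours of one of its vertices shows |V| >= delta + g - 2.  Otherwise
   the first force v -> u onto a vertex u with another coloured neighbour w closes a
   cycle through u, a shortest path of G[S] starting at v, and possibly w; so that path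
   has at least g - 2 vertices, and S also contains the delta - 2 neighbours of v off
   the path (plus, when w is not in S, a neighbour off the path of the vertex of S
   carrying w).  The complete graph K_(delta+1) attains the bound. *)

Section ShortestPath.
Variables (T : finType) (r : rel T).

Definition shortest_path x p y := [/\ path r x p, last x p = y &
  forall q, path r x q -> last x q = y -> size p <= size q].

Lemma shortest_path_exists x y : connect r x y -> exists p, shortest_path x p y.
Proof.
move=> /connectP [p0 rp0 ->].
pose reach n := [exists p : n.-tuple T, path r x p && (last x p == last x p0)].
have [|n /existsP [p /andP [rp /eqP lp]] min_n] := ex_minnP (P := reach).
  by exists (size p0); apply/existsP; exists (in_tuple p0); rewrite rp0 eqxx.
exists p; split => // q rq lq; rewrite size_tuple; apply: min_n.
by apply/existsP; exists (in_tuple q); rewrite /= rq lq eqxx.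
Qed.

Lemma shortest_path_tail x y p z : shortest_path x (y :: p) z -> shortest_path y p z.
Proof.
case=> /= /andP [rxy rp] lp minp; split => // q rq lq.
by have := minp (y :: q); rewrite /= rxy rq => /(_ isT lq).
Qed.

Lemma shortest_path_uniq x p y : shortest_path x p y -> uniq (x :: p).
Proof.
elim: p x => [|z p IHp] x // sp; rewrite cons_uniq (IHp _ (shortest_path_tail sp)) andbT.
case: sp => rp lp minp; apply/negP => xp; move: xp rp lp minp => /splitPr [p1 p2].
rewrite cat_path last_cat /= => /and3P [_ _ rp2] lp /(_ p2 rp2 lp).
by rewrite size_cat /=; lia.
Qed.

Lemma shortest_path_head x p y z : shortest_path x p y -> z \in p -> r x z ->
  z = head x p.
Proof.
case=> rp lp minp zp rxz; move: zp rp lp minp => /splitPr [[|a p1] p2] //.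
rewrite cat_path last_cat /= => /and3P [_ _ rp2] lp /(_ (z :: p2)).
by rewrite /= rxz rp2 => /(_ isT lp); rewrite size_cat /=; lia.
Qed.

Lemma shortest_path_penultimate x p y z : shortest_path x p y -> z \in x :: p ->
  r z y -> z != y -> exists s, x :: p = s ++ [:: z; y].
Proof.
case=> rp lp minp zp rzy nzy.
case/splitPr def_p: {1}(x :: p) / zp => [s1 s2]; exists s1.
have /andP [rs1z _] : sorted r (rcons s1 z) && path r z s2.
  by rewrite -sorted_cat_cons -def_p.
have last_p : last z s2 = y by rewrite -lp -[last x p]/(last x (x :: p)) def_p last_cat.
case: s2 def_p last_p => [|b s2] def_p /= last_p; first by rewrite last_p eqxx in nzy.
have def_q : x :: behead (s1 ++ [:: z; y]) = s1 ++ [:: z; y].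
  by case: s1 {rs1z} def_p => [|a s1] [->].
set q := behead _ in def_q.
have := minp q; rewrite -[path r x q]/(sorted r (x :: q)) def_q sorted_cat_cons rs1z /= rzy.
rewrite -[last x q]/(last x (x :: q)) def_q last_cat /= => /(_ isT erefl) le_pq.
have := congr1 size def_p; have := congr1 size def_q; rewrite !size_cat /=.
by case: s2 {def_p} last_p => [<-|] //= *; lia.
Qed.

Lemma shortest_path_penultimate_uniq x p y z1 z2 : shortest_path x p y ->
  z1 \in x :: p -> r z1 y -> z1 != y -> z2 \in x :: p -> r z2 y -> z2 != y -> z1 = z2.
Proof.
move=> sp z1p rz1 nz1 z2p rz2 nz2.
have [s1 def1] := shortest_path_penultimate sp z1p rz1 nz1.
have [s2 def2] := shortest_path_penultimate sp z2p rz2 nz2.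
by have := congr1 rev (etrans (esym def1) def2); rewrite !rev_cat => -[].
Qed.

End ShortestPath.

Lemma card_disjoint_seq (T : finType) (A B : {set T}) (s : seq T) :
  A \subset B -> {subset s <= B} -> uniq s -> [disjoint A & s] -> #|A| + size s <= #|B|.
Proof.
move=> sAB sB us dAs; have <- : #|[set x in s]| = size s by rewrite cardsE; apply/card_uniqP.
rewrite -cardsUI; have -> : A :&: [set x in s] = set0.
  by apply/setP => x; rewrite !inE; apply/andP => -[/(disjointFr dAs) ->].
by rewrite cards0 addn0 subset_leq_card // subUset sAB; apply/subsetP => x; rewrite inE => /sB.
Qed.

Section Graph.
Variables (T : finType) (e : rel T).
Hypotheses (e_sym : symmetric e) (e_irr : irreflexive e).

Variable g : nat.
Hypothesis girth_le : forall s, is_cycle e s -> g <= size s.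

Lemma girth_le_path x p : path e x p -> uniq (x :: p) -> 1 < size p ->
  e (last x p) x -> g <= (size p).+1.
Proof.
by move=> ep up p_gt1 epx; apply: (girth_le (s := x :: p)); split; rewrite // /cycle rcons_path ep.
Qed.

Variable delta : nat.
Hypotheses (deg_ge : forall v, delta <= deg e v) (delta_ge3 : 3 <= delta).

(* A chord of a shortest cycle would cut out a shorter one. *)
Lemma shortest_cycle_nbhd c q : is_cycle e (c :: q) -> size (c :: q) = g ->
  nbhd e c :&: [set x in c :: q] \subset [set head c q; last c q].
Proof.
case=> uq _ /=; rewrite rcons_path => /andP [ecq _] gq.
apply/subsetP => x; rewrite !inE => /andP [cx /orP [/eqP xc|xq]].
  by rewrite xc e_irr in cx.
move: xq uq ecq gq => /splitPr [[|a q1] q2]; rewrite ?eqxx //.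
case/lastP: q2 => [|q2 b]; first by rewrite last_cat /= eqxx orbT.
set p := (a :: q1) ++ [:: x]; rewrite -cat_cons => uq ecq gq.
have ep : path e c p by move: ecq; rewrite !cat_path /= => /and3P [-> -> _].
have up : uniq (c :: p) by move: uq; rewrite -[x :: _]cat1s catA cat_uniq => /andP [].
have := girth_le_path ep up; rewrite /p last_cat e_sym cx size_cat addn1 => /(_ isT isT).
by rewrite -gq size_cat /= size_rcons; lia.
Qed.

Lemma shortest_cycle_card s : is_cycle e s -> size s = g -> delta + g - 2 <= #|T|.
Proof.
case: s => [|c q] cs gs; first by case: cs.
have [uq _ _] := cs; set C := [set x in c :: q].
have card_C : #|C| = g by rewrite cardsE -gs; apply/card_uniqP.
have chords : #|nbhd e c :&: C| <= 2.
  by rewrite (leq_trans (subset_leq_card (shortest_cycle_nbhd cs gs))) // cards2; case: (_ != _).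
have := subset_leq_card (subsetT (C :|: nbhd e c)); rewrite cardsT cardsU setIC card_C.
by have := deg_ge c; rewrite /deg; lia.
Qed.

Variable S : {set T}.
Hypothesis S_conn : induced_connected e S.

Definition induced := [rel a b | [&& e a b, a \in S & b \in S]].

Lemma induced_path x p : path induced x p -> path e x p /\ {subset p <= S}.
Proof.
elim: p x => [|y p IHp] x //= /andP [/and3P [xy _ yS] /IHp [ep pS]].
by rewrite xy ep; split => // z; rewrite inE => /predU1P [-> | /pS].
Qed.

Lemma shortest_induced_path x p t : shortest_path induced x p t -> x \in S ->
  [/\ path e x p, {subset x :: p <= S} & uniq (x :: p)].
Proof.
move=> sp xS; have [ep pS] := induced_path (let: And3 ip _ _ := sp in ip).
by split => [| y /predU1P [-> | /pS] |] //; apply: shortest_path_uniq sp.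
Qed.

(* The coloured set X while no force has yet closed a cycle: each coloured
   vertex outside S is a leaf of G[X] hanging from a vertex y of S, and all
   the other neighbours of y lie in S. *)
Definition pendant (X : {set T}) := S \subset X /\ forall x, x \in X -> x \notin S ->
  exists2 y, y \in S & nbhd e x :&: X = [set y] /\ nbhd e y :\ x \subset S.

Lemma pendant_deg X x : pendant X -> x \in X -> x \notin S ->
  deg e x = (#|nbhd e x :\: X|).+1.
Proof.
by case=> _ pX xX xS; have [y _ [Nx _]] := pX x xX xS; rewrite /deg -(cardsID X) Nx cards1.
Qed.

Lemma pendant_full : pendant [set: T] -> S = [set: T].
Proof.
move=> pT; apply/setP => x; rewrite inE; apply/negPn/negP => xS.
by have := deg_ge x; rewrite (pendant_deg pT (in_setT x) xS) setDT cards0; lia.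
Qed.

Lemma pendant_forcer_in_S X u v : pendant X -> v \in X -> nbhd e v :\: X = [set u] ->
  v \in S.
Proof.
move=> pX vX v_forces; apply/negPn/negP => vS.
by have := deg_ge v; rewrite (pendant_deg pX vX vS) v_forces cards1; lia.
Qed.

Section Force.
Variables (X : {set T}) (u v : T).
Hypotheses (pX : pendant X) (vS : v \in S) (uX : u \notin X).
Hypothesis v_forces : nbhd e v :\: X = [set u].

Lemma forced_nbhd : e v u.
Proof. by move: (set11 u); rewrite -v_forces !inE => /andP []. Qed.

Lemma forcer_nbhd_sub : nbhd e v :\ u \subset S.
Proof.
apply/subsetP => y; rewrite !inE => /andP [yu vy].
have yX : y \in X.
  by apply: contraNT yu => yX; rewrite -in_set1 -v_forces !inE yX.
apply/negPn/negP => yS; have [y' _ [Ny sub_S]] := pX.2 y yX yS.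
have vy' : v = y' by apply/set1P; rewrite -Ny !inE e_sym vy (subsetP pX.1).
subst y'.
have /(subsetP sub_S)/(subsetP pX.1) : u \in nbhd e v :\ y.
  by rewrite !inE forced_nbhd andbT; apply: contraNneq uX => ->.
by rewrite (negbTE uX).
Qed.

Lemma pendant_step : nbhd e u :&: X = [set v] -> pendant (u |: X).
Proof.
move=> Nu; split=> [|x]; first exact: subset_trans pX.1 (subsetUr _ _).
rewrite !inE => /predU1P [-> | xX] xS.
  exists v => //; split; last exact: forcer_nbhd_sub.
  rewrite setIUr -Nu; apply/setP => w; rewrite !inE.
  by case: (eqVneq w u) => [-> | _]; rewrite ?e_irr ?andbF.
have [y yS [Nx sub_S]] := pX.2 x xX xS; exists y => //; split => //.
rewrite setIUr Nx; apply/setP => w; rewrite !inE.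
case: (eqVneq w u) => [-> | _]; last by rewrite andbF.
suff -> : e x u = false by [].
apply/negbTE/negP => xu; have : x \in nbhd e u :&: X by rewrite !inE e_sym xu xX.
by rewrite Nu => /set1P xv; rewrite xv vS in xS.
Qed.

(* S contains the path, Z, and the delta - 2 neighbours of v other than u and p1,
   which avoid the path because it is shortest. *)
Lemma forcer_path_card (Z : {set T}) p1 p t :
  shortest_path induced v (p1 :: p) t -> Z \subset S ->
  [disjoint Z & v :: p1 :: p] -> [disjoint Z & nbhd e v] ->
  #|Z| + delta + size p <= #|S|.
Proof.
move=> sp ZS Zp Zv; set A := nbhd e v :\ u :\ p1.
have [_ pS up] := shortest_induced_path sp vS.
have AS : A \subset S by apply: subset_trans (subsetDl _ _) forcer_nbhd_sub.
have A_off : [disjoint A & v :: p1 :: p].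
  apply/pred0P => y /=; apply/negbTE/andP; rewrite !inE => -[/and3P [yp1 yu vy] /predU1P [yv | yp]].
    by rewrite yv e_irr in vy.
  have vy_S : induced v y by rewrite /= vy vS (subsetP AS) // !inE yp1 yu.
  by rewrite (shortest_path_head sp yp vy_S) eqxx in yp1.
have card_A : delta <= #|A| + 2.
  have := deg_ge v; rewrite /deg (cardsD1 u) (cardsD1 p1 (_ :\ u)) -/A.
  by case: (_ \in _); case: (_ \in _); lia.
have ZA : [disjoint Z & A].
  by apply: disjointWr Zv; apply: subset_trans (subsetDl _ _) (subsetDl _ _).
have ZA_off : [disjoint Z :|: A & v :: p1 :: p].
  apply/pred0P => y /=; apply/negbTE/andP; rewrite inE => -[/orP [yZ | yA] yp].
    by rewrite (disjointFr Zp yZ) in yp.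
  by rewrite (disjointFr A_off yA) in yp.
have ZAS : Z :|: A \subset S by rewrite subUset ZS AS.
have := card_disjoint_seq ZAS pS up ZA_off.
by rewrite cardsU (disjoint_setI0 ZA) cards0 subn0 /=; lia.
Qed.

Lemma forcer_path_card0 p1 p t : shortest_path induced v (p1 :: p) t ->
  delta + size p <= #|S|.
Proof.
have set0_off (A : {pred T}) : [disjoint set0 & A] by apply/pred0P => y; rewrite /= inE.
by move=> sp; have := forcer_path_card sp (sub0set S) (set0_off _) (set0_off _); rewrite cards0.
Qed.

Lemma forced_notin_S : u \notin S.
Proof. exact: contra (subsetP pX.1 u) uX. Qed.

Lemma closing_force_in_S w : e u w -> w \in S -> w != v -> delta + g - 3 <= #|S|.
Proof.
move=> uw wS wv; have [[|p1 p] sp] := shortest_path_exists (S_conn vS wS).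
  by case: sp => _ /= wv'; rewrite wv' eqxx in wv.
have [ep pS up] := shortest_induced_path sp vS; have [_ lp _] := sp.
have eup : path e u (v :: p1 :: p) by apply/andP; rewrite e_sym forced_nbhd.
have uup : uniq (u :: v :: p1 :: p) by rewrite cons_uniq up (contra (pS u)) ?forced_notin_S.
have := girth_le_path eup uup isT; rewrite [last _ _]lp e_sym uw => /(_ isT).
by have := forcer_path_card0 sp; rewrite /=; lia.
Qed.

Lemma closing_force_out_S w : e u w -> w \in X -> w \notin S -> delta + g - 3 <= #|S|.
Proof.
move=> uw wX wS; have [y yS [Nw Ny]] := pX.2 w wX wS.
have wy : e w y by move: (set11 y); rewrite -Nw !inE => /andP [].
have uw' : u != w by apply: contraNneq uX => ->.
have vy : v != y.
  apply: contraNneq uX => vy; rewrite -vy in Ny; apply/(subsetP pX.1)/(subsetP Ny).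
  by rewrite !inE uw' forced_nbhd.
have [[|p1 p] sp] := shortest_path_exists (S_conn vS yS).
  by case: sp => _ /= yv; rewrite yv eqxx in vy.
have [ep pS up] := shortest_induced_path sp vS; have [_ lp _] := sp.
have w_off : w \notin v :: p1 :: p := contra (pS w) wS.
have g_le : g <= (size p).+4.
  have eup : path e u (rcons (v :: p1 :: p) w).
    by rewrite rcons_path [last _ _]lp e_sym wy andbT; apply/andP; rewrite e_sym forced_nbhd.
  have uup : uniq (u :: rcons (v :: p1 :: p) w).
    rewrite cons_uniq rcons_uniq w_off up mem_rcons in_cons negb_or uw'.
    by rewrite (contra (pS u)) ?forced_notin_S.
  by have := girth_le_path eup uup; rewrite size_rcons last_rcons e_sym uw => /(_ isT isT).
have [z [yz zw z_off]] : exists z, [/\ e y z, z != w & z \notin v :: p1 :: p].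
  set B := nbhd e y :\ w; set P := [set x in v :: p1 :: p].
  have card_B : delta <= #|B|.+1.
    by move: (deg_ge y); rewrite /deg (cardsD1 w) -/B; case: (_ \in _) => h; clear -h; lia.
  have card_BP : #|B :&: P| <= 1.
    apply/card_le1_eqP => z1 z2 /setIP [/setD1P [_ yz1] z1p] /setIP [/setD1P [_ yz2] z2p].
    rewrite !inE in yz1 yz2 z1p z2p.
    have near_y z' : e y z' -> z' \in v :: p1 :: p -> induced z' y && (z' != y).
      move=> yz' z'p; rewrite /= e_sym yz' pS // yS /=.
      by apply: contraTneq yz' => ->; rewrite e_irr.
    have /andP [z1y nz1] := near_y _ yz1 z1p; have /andP [z2y nz2] := near_y _ yz2 z2p.
    exact: (shortest_path_penultimate_uniq sp z2p z2y nz2 z1p z1y nz1).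
  have /card_gt0P [z] : 0 < #|B :\: P|.
    by rewrite cardsD; move: card_B card_BP delta_ge3; clear; lia.
  by case/setDP => /setD1P [zw]; rewrite !in_set => yz zp; exists z.
have zS : z \in S by apply: (subsetP Ny); rewrite !inE zw yz.
case: (boolP (e v z)) => vz.
  have ezp : path e z (v :: p1 :: p) by apply/andP; rewrite e_sym vz.
  have uzp : uniq (z :: v :: p1 :: p) by rewrite cons_uniq z_off.
  have := girth_le_path ezp uzp isT; rewrite [last _ _]lp yz => /(_ isT) /= g_le'.
  by have := forcer_path_card0 sp; move: g_le'; clear; lia.
have z_sub : [set z] \subset S by rewrite sub1set.
have z_off' : [disjoint [set z] & v :: p1 :: p].
  by apply/pred0P => x /=; rewrite inE; case: eqP => // ->; apply/negbTE.
have z_nv : [disjoint [set z] & nbhd e v] by rewrite disjoints1 inE.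
by have := forcer_path_card sp z_sub z_off' z_nv; rewrite cards1; move: g_le; clear; lia.
Qed.

End Force.

Hypothesis girth_cycle : exists s, is_cycle e s /\ size s = g.

Lemma pendant_forcing_card X : forces_all e X -> pendant X -> delta + g - 3 <= #|S|.
Proof.
elim=> {X} [X -> | X u [v [vX uX v_forces]] _ IHX] pX.
  have [s [cs gs]] := girth_cycle; rewrite (pendant_full pX) cardsT.
  by have := shortest_cycle_card cs gs; lia.
have vS := pendant_forcer_in_S pX vX v_forces.
have [/exists_inP [w wX /andP [uw wv]] | no_w] := boolP [exists w in X, e u w && (w != v)].
  have [wS | wS] := boolP (w \in S).
    exact: (closing_force_in_S pX vS uX v_forces uw wS wv).
  exact: (closing_force_out_S pX vS uX v_forces uw wX wS).
apply/IHX/(pendant_step pX vS uX v_forces)/setP => w; rewrite !inE.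
case: (eqVneq w v) => [-> | wv]; first by rewrite e_sym (forced_nbhd v_forces) (subsetP pX.1).
by apply/negbTE; apply: contraNN no_w => /andP [uw wX]; apply/exists_inP; exists w; rewrite ?uw.
Qed.

End Graph.

Lemma connected_forcing_set_card (T : finType) (e : rel T) g delta (S : {set T}) :
  simple_graph e -> girth e g -> min_degree e delta -> 3 <= delta ->
  connected_forcing_set e S -> delta + g - 3 <= #|S|.
Proof.
move=> [e_sym e_irr] [g_cycle g_min] [_ deg_ge] delta_ge3 [S_forces S_conn].
have pS : pendant e S S by split=> // x ->.
exact: (pendant_forcing_card e_sym e_irr g_min deg_ge delta_ge3 S_conn g_cycle S_forces pS).
Qed.

Section CompleteGraph.
Variable n : nat.

Definition complete : rel 'I_n.+1 := fun i j => i != j.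

Lemma complete_simple : simple_graph complete.
Proof. by split => [i j | i]; rewrite /complete ?eqxx // eq_sym. Qed.

Lemma complete_connected : connected_graph complete.
Proof. by move=> i j; case: (eqVneq i j) => [-> | ij]; [exact: connect0 | exact: connect1]. Qed.

Lemma complete_nbhd i : nbhd complete i = [set~ i].
Proof. by apply/setP => j; rewrite !inE /complete eq_sym. Qed.

Lemma complete_min_degree : min_degree complete n.
Proof.
have deg_n i : deg complete i = n by rewrite /deg complete_nbhd cardsC1 card_ord.
by split=> [|i]; [exists ord0 | ]; rewrite deg_n.
Qed.

Lemma complete_girth : 1 < n -> girth complete 3.
Proof.
move=> n_gt1; split=> [|s []//].
pose i k (k_lt3 : k < 3) := Ordinal (leq_trans k_lt3 (n_gt1 : 2 < n.+1)).
by exists [:: i 0 isT; i 1 isT; i 2 isT].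
Qed.

Lemma complete_Fc : 2 < n -> is_Fc complete n.
Proof.
move=> n_gt2; split; last first.
  move=> S cfS; rewrite -[leqLHS](addnK 3).
  exact: connected_forcing_set_card complete_simple (complete_girth (ltnW n_gt2))
    complete_min_degree n_gt2 cfS.
exists [set~ ord0]; split; last by rewrite cardsC1 card_ord.
split.
  apply: (@forces_more _ _ _ ord0); last by apply: forces_done; apply/setP => i; rewrite !inE orbN.
  have max_0 : ord_max != ord0 :> 'I_n.+1 by rewrite -val_eqE /=; case: (n) n_gt2.
  exists ord_max; rewrite !inE eqxx; split=> //; apply/setP => i.
  by rewrite complete_nbhd !inE; case: (eqVneq i ord0) => [-> | _] /=; rewrite 1?eq_sym.
move=> i j i0 j0; case: (eqVneq i j) => [-> | ij]; first exact: connect0.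
by apply: connect1; apply/and3P.
Qed.

End CompleteGraph.

Theorem theorem6 :
  (forall (T : finType) (e : rel T) (g delta k : nat),
      simple_graph e -> connected_graph e ->
      girth e g -> 3 <= g ->
      min_degree e delta -> 3 <= delta ->
      is_Fc e k -> delta + g - 3 <= k)
  /\
  (* sharpness: for every delta >= 3 some such graph attains the bound *)
  (forall delta : nat, 3 <= delta ->
     exists (T : finType) (e : rel T) (g : nat),
       [/\ simple_graph e, connected_graph e, girth e g /\ 3 <= g,
           min_degree e delta & is_Fc e (delta + g - 3)]).
Proof.
split=> [T e g delta k simple_e _ girth_g _ min_deg delta_ge3 [[S [cfS <-]] _] | delta delta_ge3].
  exact: connected_forcing_set_card simple_e girth_g min_deg delta_ge3 cfS.
exists 'I_delta.+1, (@complete delta), 3; rewrite addnK; split.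
- exact: complete_simple.
- exact: complete_connected.
- by split; [apply: complete_girth; apply: ltnW |].
- exact: complete_min_degree.
- exact: complete_Fc.
Qed.
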